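(* Let $\mathscr{X}$ be a complex Banach space and $\mathcal{T}\subseteq\mathcal{B}(\mathscr{X})$ a non-empty set of operators. (i) For $\mathcal{A}=\mathrm{Alg}\,\mathrm{Lat}(\mathcal{T})$ we have $\mathrm{Col}(\mathcal{A})\subseteq\mathrm{Col}(\mathcal{A}\cap\mathcal{A}')$. (ii) If $\mathcal{T}'$ and $\mathcal{T}''$ are reflexive algebras, then $\mathrm{Col}(\mathcal{T}')=\mathrm{Col}(\mathcal{T}'')$.
   Context: $\mathcal{T}'$ is the commutant of $\mathcal{T}$ (operators commuting with all elements of $\mathcal{T}$) and $\mathcal{T}''=(\mathcal{T}')'$. $\mathrm{Lat}(\mathcal{T})$ is the set of closed subspaces invariant for all operators in $\mathcal{T}$; $\mathrm{Alg}(\mathfrak{F})$ is the set of operators leaving every subspace in $\mathfrak{F}$ invariant. A subalgebra $\mathcal{A}$ is reflexive if $\mathrm{Alg}\,\mathrm{Lat}(\mathcal{A})=\mathcal{A}$. For a set $\mathcal{S}$ of operators, $\mathrm{Col}(\mathcal{S})$ is the group of invertible $S\in\mathcal{B}(\mathscr{X})$ such that for every closed subspace $\mathscr{M}$: $\mathscr{M}\in\mathrm{Lat}(\mathcal{S})$ iff $S\mathscr{M}\in\mathrm{Lat}(\mathcal{S})$. *)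

From HB Require Import structures.
From mathcomp Require Import all_boot all_order all_algebra.
From mathcomp Require Import all_classical all_reals all_analysis.
From mathcomp Require Import complex.
Set Implicit Arguments. Unset Strict Implicit. Unset Printing Implicit Defensive.
Import Order.TTheory GRing.Theory Num.Theory.
Import numFieldNormedType.Exports.
Local Open Scope classical_set_scope.
Local Open Scope ring_scope.

(* Operators are represented as functions X -> X; B(X) is the set of
   bounded (= continuous) linear maps. *)

Section Defs.
Context {R : realType} {X : completeNormedModType R[i]}.

Definition bounded_op (T : X -> X) : Prop :=
  (forall (a : R[i]) (x y : X), T (a *: x + y) = a *: T x + T y) /\ continuous T.

Definition closed_subspace (M : set X) : Prop :=
  [/\ M 0, (forall (a : R[i]) x y, M x -> M y -> M (a *: x + y)) & closed M].

Definition Lat (S : set (X -> X)) : set (set X) :=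
  [set M | closed_subspace M /\ forall T, S T -> T @` M `<=` M].

Definition Alg (F : set (set X)) : set (X -> X) :=
  [set T | bounded_op T /\ forall M, F M -> T @` M `<=` M].

Definition commutant (S : set (X -> X)) : set (X -> X) :=
  [set A | bounded_op A /\ forall T, S T -> A \o T = T \o A].

Definition subalgebra (A : set (X -> X)) : Prop :=
  [/\ A `<=` bounded_op, A id,
      (forall (a : R[i]) S T, A S -> A T -> A (fun x => a *: S x + T x)) &
      (forall S T, A S -> A T -> A (S \o T))].

Definition reflexive_alg (A : set (X -> X)) : Prop :=
  subalgebra A /\ Alg (Lat A) = A.

Definition invertible_op (S : X -> X) : Prop :=
  bounded_op S /\ exists S' : X -> X, bounded_op S' /\ S \o S' = id /\ S' \o S = id.

Definition Col (S : set (X -> X)) : set (X -> X) :=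
  [set V | invertible_op V /\
     forall M : set X, closed_subspace M -> (Lat S M <-> Lat S (V @` M))].

End Defs.

From HB Require Import structures.
From mathcomp Require Import all_boot all_order all_algebra.
From mathcomp Require Import all_classical all_reals all_analysis.
From mathcomp Require Import complex.
Import GRing.Theory.
Import numFieldNormedType.Exports.
Local Open Scope classical_set_scope.
Local Open Scope ring_scope.

(* For a reflexive algebra A (Alg Lat A = A), an invertible V belongs to
   Col(A) exactly when B |-> V B V^-1 maps A onto A: if M and V M are in
   Lat A together, then V^-1 B V leaves every M in Lat A invariant, hence lies
   in Alg Lat A = A.  Invariance under such a similarity passes to commutants
   and intersections, and any set invariant under it has V in its Col.  Both
   parts follow, using Alg Lat (Alg Lat T) = Alg Lat T for (i), and the
   reflexivity of T' and T'' together with T''' = T' for (ii). *)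

Section Operators.
Context {R : realType} {X : completeNormedModType R[i]}.

Local Notation bounded_op := (@bounded_op R X).

Lemma bounded_op_comp (F G : X -> X) :
  bounded_op F -> bounded_op G -> bounded_op (F \o G).
Proof.
move=> [linF contF] [linG contG]; split; first by move=> a x y /=; rewrite linG linF.
by move=> x; apply: continuous_comp; [exact: contG | exact: contF].
Qed.

Lemma bounded_op0 (F : X -> X) : bounded_op F -> F 0 = 0.
Proof.
move=> [linF _]; have := linF 1 0 0; rewrite !scale1r !addr0 => F0.
by apply: (addrI (F 0)); rewrite addr0 -F0.
Qed.

Lemma closed_subspace_preimage {F : X -> X} {M : set X} :
  bounded_op F -> closed_subspace M -> closed_subspace (F @^-1` M).
Proof.
move=> bF [M0 Mlin Mclosed]; case: (bF) => linF contF; split => /=.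
- by rewrite bounded_op0.
- by move=> a x y Mx My; rewrite linF; exact: Mlin.
- by apply: preimage_closed => // x _; exact: contF.
Qed.

Lemma image_can_preimage {F G : X -> X} (M : set X) :
  cancel F G -> cancel G F -> F @` M = G @^-1` M.
Proof.
move=> FK GK; apply/seteqP; split => x /=; first by move=> [m Mm <-]; rewrite FK.
by move=> Mx; exists (G x); rewrite ?GK.
Qed.

Lemma Alg_Lat_Alg (F : set (set X)) : F `<=` @closed_subspace R X ->
  Alg (Lat (Alg F)) = Alg F.
Proof.
move=> F_cs; apply/seteqP; split => B [bB invB]; split => // M.
- move=> FM; apply: invB; split; first exact: F_cs.
  by move=> C [_ invC]; exact: invC.
- by move=> [_ invM]; exact: invM.
Qed.

Lemma commutant3 {S : set (X -> X)} : S `<=` bounded_op ->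
  commutant (commutant (commutant S)) = commutant S.
Proof.
move=> S_bounded; apply/seteqP; split => C [bC commC]; split => //.
- move=> B SB; apply: commC; split; first exact: S_bounded.
  by move=> D [_ commD]; rewrite (commD _ SB).
- by move=> E [_ commE]; rewrite (commE _ (conj bC commC)).
Qed.

Section Similarity.
Variables V W : X -> X.
Hypotheses (bV : bounded_op V) (bW : bounded_op W).
Hypotheses (VK : cancel V W) (WK : cancel W V).

Definition similarity_invariant (S : set (X -> X)) :=
  forall B, S B -> S (V \o B \o W) /\ S (W \o B \o V).

Let bounded_conj B : bounded_op B ->
  bounded_op (V \o B \o W) /\ bounded_op (W \o B \o V).
Proof. by move=> bB; split; do 2 apply: bounded_op_comp => //. Qed.

Lemma similarity_invariantI (S1 S2 : set (X -> X)) :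
  similarity_invariant S1 -> similarity_invariant S2 ->
  similarity_invariant (S1 `&` S2).
Proof. by move=> inv1 inv2 B [/inv1 [? ?] /inv2 [? ?]]. Qed.

Lemma similarity_invariant_commutant (S : set (X -> X)) :
  similarity_invariant S -> similarity_invariant (commutant S).
Proof.
move=> invS C [/bounded_conj [bVCW bWCV] commC]; split; split => // B /invS.
- move=> [_ /commC commWBV]; apply/funext => x /=.
  by have := congr1 (fun f => f (W x)) commWBV; rewrite /= WK => ->.
- move=> [/commC commVBW _]; apply/funext => x /=.
  by have := congr1 (fun f => f (V x)) commVBW; rewrite /= VK => ->.
Qed.

Lemma Col_similarity_invariant (S : set (X -> X)) :
  similarity_invariant S -> Col S V.
Proof.
move=> invS; split.
  by split => //; exists W; do !split => //; apply: funext.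
move=> M csM; rewrite (image_can_preimage M VK WK); split => -[_ invM].
- split; first exact: closed_subspace_preimage.
  move=> B /invS [_ /invM WBV_M] _ [x Mx <-] /=.
  by rewrite -[x]WK; apply: WBV_M; exists (W x).
- split => // B /invS [/invM VBW_M _] _ [x Mx <-].
  by rewrite -[B x]VK; apply: VBW_M; exists (V x); rewrite /= ?VK.
Qed.

Lemma reflexive_similarity_invariant (A : set (X -> X)) :
  Alg (Lat A) = A ->
  (forall M : set X, closed_subspace M -> (Lat A M <-> Lat A (V @` M))) ->
  similarity_invariant A.
Proof.
move=> reflA LatV B AB; have [/bounded_conj [bVBW bWBV] invB] : Alg (Lat A) B.
  by rewrite reflA.
split; rewrite -reflA; split => // N LatN _ [x Nx <-] /=.
- have LatWN : Lat A (V @^-1` N).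
    apply/(LatV _ (closed_subspace_preimage bV LatN.1)).
    rewrite (image_can_preimage _ VK WK) (_ : W @^-1` _ = N) //.
    by apply/seteqP; split => y /=; rewrite WK.
  by apply: (invB _ LatWN); exists (W x); rewrite /= ?WK.
- have LatVN : Lat A (V @` N) by apply/(LatV _ LatN.1).
  have [y Ny /(congr1 W)] : (V @` N) (B (V x)).
    by apply: (invB _ LatVN); exists (V x) => //; exists x.
  by rewrite VK => <-.
Qed.

End Similarity.

Lemma Col_reflexive_subset (A S : set (X -> X)) :
  Alg (Lat A) = A ->
  (forall V W, bounded_op V -> bounded_op W -> cancel V W -> cancel W V ->
     similarity_invariant V W A -> similarity_invariant V W S) ->
  Col A `<=` Col S.
Proof.
move=> reflA invAS V [[bV [W [bW [VW WV]]]] LatV].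
have VK : cancel V W by move=> x; exact: (congr1 (fun f => f x) WV).
have WK : cancel W V by move=> x; exact: (congr1 (fun f => f x) VW).
apply: (Col_similarity_invariant _ _ bV bW VK WK); apply: invAS => //.
exact: reflexive_similarity_invariant.
Qed.

Lemma Col_reflexive_commutant {A : set (X -> X)} :
  Alg (Lat A) = A -> Col A `<=` Col (commutant A).
Proof.
move=> reflA; apply: Col_reflexive_subset => // V W bV bW VK WK.
exact: similarity_invariant_commutant.
Qed.

Lemma Col_reflexive_meet_commutant {A : set (X -> X)} :
  Alg (Lat A) = A -> Col A `<=` Col (A `&` commutant A).
Proof.
move=> reflA; apply: Col_reflexive_subset => // V W bV bW VK WK invA.
by apply: similarity_invariantI => //; exact: similarity_invariant_commutant.
Qed.

End Operators.

Theorem corollary3p11 (R : realType) (X : completeNormedModType R[i])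
  (T : set (X -> X)) :
  T `<=` @bounded_op R X -> T !=set0 ->
  (let A := Alg (Lat T) in Col A `<=` Col (A `&` commutant A)) /\
  (reflexive_alg (commutant T) -> reflexive_alg (commutant (commutant T)) ->
   Col (commutant T) = Col (commutant (commutant T))).
Proof.
move=> T_bounded _; split.
  by apply: Col_reflexive_meet_commutant; apply: Alg_Lat_Alg => M [].
move=> [_ reflT'] [_ reflT'']; apply/seteqP; split.
  exact: Col_reflexive_commutant.
by have := Col_reflexive_commutant reflT''; rewrite (commutant3 T_bounded).
Qed.
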